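(* Let $w=\mu^{\omega}(a)$ where $\mu$ is an injective $r$-uniform morphism ($r\ge 2$) on a finite alphabet $A$, prolongable on $a\in A$. Suppose $w$ is eventually periodic. Then the (minimal) period of $w$ is not divisible by $r$.
   Context: A morphism $\mu$ satisfies $\mu(uv)=\mu(u)\mu(v)$ for finite $u$; it is $r$-uniform if $|\mu(b)|=r$ for all letters $b$; prolongable on $a$ means $\mu(a)$ begins with $a$, and $\mu^{\omega}(a)$ is the infinite word having every $\mu^n(a)$ as a prefix. An infinite word $w$ is eventually periodic if there is an integer $n$ such that deleting the first $n$ letters of $w$ yields a periodic word; its period is the minimal period of that periodic suffix. *)

From mathcomp Require Import all_boot.
Set Implicit Arguments. Unset Strict Implicit. Unset Printing Implicit Defensive.

Definition morph_ext (A : Type) (mu : A -> seq A) (u : seq A) : seq A :=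
  flatten (map mu u).

Definition injective_morphism (A : eqType) (mu : A -> seq A) : Prop :=
  forall u v : seq A, morph_ext mu u = morph_ext mu v -> u = v.

Definition uniform (A : Type) (r : nat) (mu : A -> seq A) : Prop :=
  forall b : A, size (mu b) = r.

Definition prolongable (A : Type) (mu : A -> seq A) (a : A) : Prop :=
  exists s : seq A, mu a = a :: s.

(* w : nat -> A is the infinite word mu^omega(a): every mu^n(a) is a prefix. *)
Definition is_fixed_point_word (A : Type) (mu : A -> seq A) (a : A)
  (w : nat -> A) : Prop :=
  forall n i, i < size (iter n (morph_ext mu) [:: a]) ->
    w i = nth a (iter n (morph_ext mu) [:: a]) i.

Definition period_from (A : Type) (w : nat -> A) (n p : nat) : Prop :=
  0 < p /\ forall i, n <= i -> w (i + p) = w i.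

Definition eventually_periodic (A : Type) (w : nat -> A) : Prop :=
  exists n p, period_from w n p.

Definition eventual_min_period (A : Type) (w : nat -> A) (p : nat) : Prop :=
  (exists n, period_from w n p) /\
  forall n q, period_from w n q -> p <= q.

(* Since w = mu(w) and mu is r-uniform, the block of w at positions r k, ..., r k + r - 1
   is mu(w k). If w had an eventual period r q, then mu(w (i + q)) and mu(w i) would be
   the same block, so w (i + q) = w i by injectivity: q would be a smaller period. *)
From mathcomp Require Import all_boot.
From mathcomp Require Import zify.

Set Implicit Arguments.
Unset Strict Implicit.
Unset Printing Implicit Defensive.

Section UniformMorphism.

Variables (A : Type) (r : nat) (mu : A -> seq A).
Hypothesis mu_uniform : uniform r mu.

Lemma size_morph_ext (u : seq A) : size (morph_ext mu u) = r * size u.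
Proof.
elim: u => [|x u IHu]; first by rewrite muln0.
by rewrite /morph_ext /= size_cat mu_uniform -/(morph_ext mu u) IHu mulnS.
Qed.

Lemma nth_morph_ext (d : A) (u : seq A) k j : k < size u -> j < r ->
  nth d (morph_ext mu u) (r * k + j) = nth d (mu (nth d u k)) j.
Proof.
elim: u k => [|x u IHu] [|k] //= lt_k lt_j;
  rewrite /morph_ext /= nth_cat mu_uniform -/(morph_ext mu u).
- by rewrite muln0 add0n lt_j.
- have -> : (r * k.+1 + j < r) = false by lia.
  have -> : r * k.+1 + j - r = r * k + j by lia.
  exact: IHu.
Qed.

Lemma size_iter_morph_ext (a : A) n :
  size (iter n (morph_ext mu) [:: a]) = r ^ n.
Proof. by elim: n => [|n IHn] //=; rewrite size_morph_ext IHn expnS. Qed.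

Lemma fixed_point_word_block (a : A) (w : nat -> A) k j :
  1 < r -> is_fixed_point_word mu a w -> j < r ->
  w (r * k + j) = nth a (mu (w k)) j.
Proof.
move=> r_gt1 fix_w lt_j.
have lt_k : k < r ^ k by rewrite ltn_expl.
rewrite (fix_w k.+1) /=; last by rewrite size_morph_ext size_iter_morph_ext; nia.
by rewrite nth_morph_ext ?size_iter_morph_ext // -fix_w ?size_iter_morph_ext.
Qed.

Lemma fixed_point_word_image (a : A) (w : nat -> A) k :
  1 < r -> is_fixed_point_word mu a w ->
  mu (w k) = mkseq (fun j => w (r * k + j)) r.
Proof.
move=> r_gt1 fix_w; apply: (@eq_from_nth _ a); first by rewrite size_mkseq.
move=> j; rewrite mu_uniform => lt_j.
by rewrite nth_mkseq // (fixed_point_word_block k r_gt1 fix_w lt_j).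
Qed.

End UniformMorphism.

Lemma injective_morphism_inj (A : eqType) (mu : A -> seq A) :
  injective_morphism mu -> injective mu.
Proof.
move=> inj_mu b c eq_bc.
have [] // : [:: b] = [:: c] by apply: inj_mu; rewrite /morph_ext /= !cats0.
Qed.

Lemma fixed_point_period_div (A : eqType) (r : nat) (mu : A -> seq A) (a : A)
    (w : nat -> A) n q :
  1 < r -> injective_morphism mu -> uniform r mu -> is_fixed_point_word mu a w ->
  period_from w n (r * q) -> period_from w n q.
Proof.
move=> r_gt1 inj_mu unif_mu fix_w [rq_gt0 per_w].
split; first by rewrite muln_gt0 in rq_gt0; case/andP: rq_gt0.
move=> i le_ni; apply: (injective_morphism_inj inj_mu).
rewrite !(fixed_point_word_image unif_mu _ r_gt1 fix_w); apply: eq_mkseq => j.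
by rewrite mulnDr -addnAC per_w //; nia.
Qed.

Theorem lemma10 (A : finType) (r : nat) (mu : A -> seq A) (a : A)
  (w : nat -> A) :
  2 <= r ->
  injective_morphism mu ->
  uniform r mu ->
  prolongable mu a ->
  is_fixed_point_word mu a w ->
  eventually_periodic w ->
  forall p, eventual_min_period w p -> ~~ (r %| p).
Proof.
(* Prolongability only guarantees that w exists; here w is given. *)
move=> r_gt1 inj_mu unif_mu _ fix_w _ p [[n per_p] min_p].
apply/negP => /dvdnP [q def_p].
have per_q : period_from w n q.
  by apply: (fixed_point_period_div r_gt1 inj_mu unif_mu fix_w); rewrite mulnC -def_p.
have [p_gt0 _] := per_p.
have := min_p n q per_q; rewrite def_p; nia.
Qed.
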